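(* Let $(\Sigma,T)$ be a closed triangulated surface with vertex set $V$ and edge set $E$, let $\delta\in\{-1,0,1\}$ and $\Phi:E\to I_\delta$. Then $\mathcal{N}_{0,\delta}(\Phi)=\mathbb{R}^V$, and for every $r\in\mathbb{R}^V$ and every triangle with vertices $v_i,v_j,v_k$, the generalized angle at $v_k$ of the decorated ideal triangle $\Delta v_iv_jv_k$ equals $$\theta_k=\frac{2\rho_\delta(\Phi(v_iv_j)/2)}{\rho_\delta(\Phi(v_jv_k)/2)\,\rho_\delta(\Phi(v_kv_i)/2)}\,e^{-r(v_k)}.$$ Consequently there is $C:V\to\mathbb{R}_{>0}$ depending only on $\Phi$ and $\delta$ such that $\widetilde K(r)(v)=C(v)e^{-r(v)}$ for all $r\in\mathbb{R}^V$ and $v\in V$.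
   Context: Generalized hyperbolic triangles (in $\mathbb{H}^2$) are convex regions bounded by three geodesics (forming a Euclidean triangle in the Klein model) truncated by common perpendiculars at vertices outside $\overline{\mathbb{H}^2}$, with horodisks at ideal vertices; a generalized vertex has type $1$ (in $\mathbb{H}^2$), $0$ (ideal) or $-1$ (hyperideal). Generalized angle: interior angle (type 1), twice the horocyclic arc length between the sides (type 0), distance between the two sides (type $-1$). Generalized edge length between generalized vertices $u,v$: with $B_u$ the point, the horodisk, or the half-plane beyond the truncating perpendicular, it is $d(B_u,B_v)$ if these are disjoint and minus the distance between the points where $\partial B_u,\partial B_v$ meet the side otherwise. $I_\delta=\mathbb{R}_{>0}$ for $\delta\in\{0,-1\}$, $(0,\pi]$ for $\delta=1$; $\rho_1=\sin$, $\rho_0(x)=x$, $\rho_{-1}=\sinh$. Generalized circle packing of type $(0,0,\delta)$: for $r:V\to\mathbb{R}$ and an edge $v_iv_j$, $l(v_iv_j)$ is the generalized length of the side $v_iv_j$ of a generalized triangle $\Delta v_iv_jq$ of type $(0,0,\delta)$ (ideal vertices $v_i,v_j$, type-$\delta$ vertex $q$) whose sides $v_iq,v_jq$ have lengths $r(v_i),r(v_j)$ and whose generalized angle at $q$ is $\Phi(v_iv_j)$ (if $\delta=1$ and $\Phi=\pi$, $l=r(v_i)+r(v_j)$). $\mathcal{N}_{0,\delta}(\Phi)$ is the set of $r$ for which all $l$ are defined and, for each triangle $v_iv_jv_k$ of $T$, there is a decorated ideal triangle with these three edge lengths. $\widetilde K(r)(v)$ is the sum of the generalized angles at $v$ in all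 these decorated ideal triangles incident to $v$. *)

From mathcomp Require Import all_boot.
From Stdlib Require Import Reals ZArith.
Set Implicit Arguments. Unset Strict Implicit. Unset Printing Implicit Defensive.

Open Scope R_scope.

(* Hyperboloid (Minkowski) model of H^2 in R^{2,1}.                    *)
Record vec3 := mkv { x0 : R; x1 : R; x2 : R }.

Definition mink (a b : vec3) : R := - x0 a * x0 b + x1 a * x1 b + x2 a * x2 b.
Definition vadd (a b : vec3) : vec3 := mkv (x0 a + x0 b) (x1 a + x1 b) (x2 a + x2 b).
Definition vscal (c : R) (a : vec3) : vec3 := mkv (c * x0 a) (c * x1 a) (c * x2 a).
Definition vsub (a b : vec3) : vec3 := vadd a (vscal (-1) b).

(* generalized vertex of type 1: a point of H^2 *)
Definition H2pt (p : vec3) : Prop := mink p p = -1 /\ 0 < x0 p.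
(* generalized vertex of type 0 with a horodisk: future light-cone vector u;
   horodisk B_u = { x in H^2 | - <x,u> <= 1 }, horocycle { <x,u> = -1 } *)
Definition ideal (u : vec3) : Prop := mink u u = 0 /\ 0 < x0 u.
(* generalized vertex of type -1: unit spacelike n; truncating geodesic
   n^perp ∩ H^2, half-plane B_n = { x | <x,n> >= 0 } (the triangle lies in <x,n> <= 0) *)
Definition hyperideal (n : vec3) : Prop := mink n n = 1.

(* distinct ideal points *)
Definition not_prop (u v : vec3) : Prop := forall c : R, v <> vscal c u.

(* generalized length between two decorated ideal vertices (horodisks) *)
Definition horo_horo_len (u v : vec3) : R := ln (- mink u v / 2).
(* generalized (signed) length between a point p of H^2 and the horodisk B_u,
   measured along the geodesic from p to the ideal point of u *)
Definition pt_horo_len (p u : vec3) : R := ln (- mink p u).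

(* x is the point where the geodesic from the ideal point of w to that of u
   meets the horocycle ∂B_w *)
Definition on_horo_side (w u x : vec3) : Prop :=
  H2pt x /\ mink x w = -1 /\ exists a b : R, x = vadd (vscal a w) (vscal b u).

(* generalized angle at a type-0 vertex w between sides to u and v:
   twice the horocyclic arc length on ∂B_w between the two sides
   (horocyclic arc length between x,y on a horocycle = sqrt <x-y,x-y>) *)
Definition ideal_angle (w u v : vec3) (th : R) : Prop :=
  exists xu xv, on_horo_side w u xu /\ on_horo_side w v xv /\
    th = 2 * sqrt (mink (vsub xu xv) (vsub xu xv)).

(* unit tangent vector t at q in H^2 pointing to the ideal point of u *)
Definition tangent_to (q u t : vec3) : Prop :=
  mink t q = 0 /\ mink t t = 1 /\ exists a : R, 0 < a /\ u = vscal a (vadd q t).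

(* interior angle at a type-1 vertex q between the sides to u and v *)
Definition hyp_angle (q u v : vec3) (th : R) : Prop :=
  exists tu tv, tangent_to q u tu /\ tangent_to q v tv /\
    0 < th <= PI /\ cos th = mink tu tv.

(* foot p on the truncating geodesic n^perp of the side from the ideal point u
   (the side is the geodesic through u perpendicular to n^perp) *)
Definition foot (n u p : vec3) : Prop :=
  H2pt p /\ mink p n = 0 /\ exists a b : R, p = vadd (vscal a u) (vscal b n).

(* generalized angle at a type -1 vertex n: distance between the two sides
   (realised by the common perpendicular n^perp, i.e. between the feet) *)
Definition hyperideal_angle (n u v : vec3) (th : R) : Prop :=
  exists pu pv, foot n u pu /\ foot n v pv /\ 0 < th /\ cosh th = - mink pu pv.

Definition in_I (d : Z) (x : R) : Prop :=
  if Z.eq_dec d 1 then 0 < x <= PI else 0 < x.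
Definition rho (d : Z) (x : R) : R :=
  if Z.eq_dec d 1 then sin x else if Z.eq_dec d 0 then x else sinh x.

(* l is the generalized length of side v_i v_j of a generalized triangle
   Δ v_i v_j q of type (0,0,d), with ideal vertices v_i,v_j, sides v_i q, v_j q
   of lengths ri, rj and generalized angle phi at q.
   (d = 1, phi = PI: l = ri + rj by convention.) *)
Definition gen_len00 (d : Z) (ri rj phi l : R) : Prop :=
  if Z.eq_dec d 1 then
    (phi = PI /\ l = ri + rj) \/
    (phi < PI /\ exists ui uj q, ideal ui /\ ideal uj /\ not_prop ui uj /\ H2pt q /\
       pt_horo_len q ui = ri /\ pt_horo_len q uj = rj /\ hyp_angle q ui uj phi /\
       horo_horo_len ui uj = l)
  else if Z.eq_dec d 0 then
    exists ui uj w, ideal ui /\ ideal uj /\ ideal w /\ not_prop ui uj /\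
       not_prop w ui /\ not_prop w uj /\
       horo_horo_len w ui = ri /\ horo_horo_len w uj = rj /\ ideal_angle w ui uj phi /\
       horo_horo_len ui uj = l
  else
    exists ui uj n, ideal ui /\ ideal uj /\ hyperideal n /\ not_prop ui uj /\
       mink ui n < 0 /\ mink uj n < 0 /\
       (exists pi pj, foot n ui pi /\ foot n uj pj /\
          pt_horo_len pi ui = ri /\ pt_horo_len pj uj = rj) /\
       hyperideal_angle n ui uj phi /\ horo_horo_len ui uj = l.

(* Faces F, each with corners 'I_3; fv f k = vertex at corner k,       *)
(* fe f k = edge opposite to corner k (between corners cn1 k and cn2 k). *)
Definition cn1 (k : 'I_3) : 'I_3 := Ordinal (ltn_pmod k.+1 (ltn0Sn 2)).
Definition cn2 (k : 'I_3) : 'I_3 := cn1 (cn1 k).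

Definition closed_tri_surface (V E F : finType) (fv : F -> 'I_3 -> V)
  (fe : F -> 'I_3 -> E) : Prop :=
  (forall v : V, exists f k, fv f k = v) /\
  (forall e : E, #|[set c : (F * 'I_3)%type | fe c.1 c.2 == e]| = 2%N) /\
  (forall f g k j, fe f k = fe g j ->
     (fv f (cn1 k) = fv g (cn1 j) /\ fv f (cn2 k) = fv g (cn2 j)) \/
     (fv f (cn1 k) = fv g (cn2 j) /\ fv f (cn2 k) = fv g (cn1 j))).

Definition dec_ideal_tri (u : 'I_3 -> vec3) (len : 'I_3 -> R) : Prop :=
  (forall k, ideal (u k)) /\ (forall k, not_prop (u (cn1 k)) (u (cn2 k))) /\
  (forall k, horo_horo_len (u (cn1 k)) (u (cn2 k)) = len k).

Definition packing_lengths (V E F : finType) (fv : F -> 'I_3 -> V) (fe : F -> 'I_3 -> E)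
  (d : Z) (Phi : E -> R) (r : V -> R) (l : E -> R) : Prop :=
  forall f k, gen_len00 d (r (fv f (cn1 k))) (r (fv f (cn2 k))) (Phi (fe f k)) (l (fe f k)).

Definition in_N (V E F : finType) (fv : F -> 'I_3 -> V) (fe : F -> 'I_3 -> E)
  (d : Z) (Phi : E -> R) (r : V -> R) : Prop :=
  exists l, packing_lengths fv fe d Phi r l /\
    forall f, exists u, dec_ideal_tri u (fun k => l (fe f k)).

Definition is_Ktilde (V E F : finType) (fv : F -> 'I_3 -> V) (fe : F -> 'I_3 -> E)
  (d : Z) (Phi : E -> R) (r : V -> R) (K : V -> R) : Prop :=
  exists l, packing_lengths fv fe d Phi r l /\
  exists th : F -> 'I_3 -> R,
    (forall f, exists u, dec_ideal_tri u (fun k => l (fe f k)) /\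
        forall k, ideal_angle (u k) (u (cn1 k)) (u (cn2 k)) (th f k)) /\
    (forall v, K v = \big[Rplus/R0]_(c : (F * 'I_3)%type | fv c.1 c.2 == v) th c.1 c.2).

(* In the hyperboloid model every generalized length of type (0,0,δ) satisfies
   e^l = ρ_δ(Φ/2)^2 e^{r_i + r_j}: this is a short Lorentzian computation once
   the horodisks, the vertex q and its generalized angle are written out.
   Conversely explicit configurations realise this value, and decorated ideal
   triangles exist for arbitrary edge lengths, so N_{0,δ}(Φ) is everything.
   In a decorated ideal triangle the horocyclic angle at v_k is
   2 (e^{l_k} / (e^{l_i} e^{l_j}))^{1/2}; substituting the lengths, the r's of
   v_i and v_j cancel and θ_k = 2 ρ_k / (ρ_i ρ_j) e^{-r(v_k)}.  Summing over the
   corners at v gives K(r)(v) = C(v) e^{-r(v)}. *)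
From HB Require Import structures.
From mathcomp Require Import all_boot.
From Stdlib Require Import Reals ZArith Lra Psatz.
Set Implicit Arguments. Unset Strict Implicit.
Open Scope R_scope.

Lemma mink_sym a b : mink a b = mink b a.
Proof. destruct a, b; unfold mink; simpl; ring. Qed.

Lemma mink_addl a b c : mink (vadd a b) c = mink a c + mink b c.
Proof. destruct a, b, c; unfold mink, vadd; simpl; ring. Qed.

Lemma mink_addr a b c : mink c (vadd a b) = mink c a + mink c b.
Proof. destruct a, b, c; unfold mink, vadd; simpl; ring. Qed.

Lemma mink_scall s a c : mink (vscal s a) c = s * mink a c.
Proof. destruct a, c; unfold mink, vscal; simpl; ring. Qed.

Lemma mink_scalr s a c : mink c (vscal s a) = s * mink c a.
Proof. destruct a, c; unfold mink, vscal; simpl; ring. Qed.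

Lemma mink_combl a b w u z :
  mink (vadd (vscal a w) (vscal b u)) z = a * mink w z + b * mink u z.
Proof. by rewrite mink_addl !mink_scall. Qed.

Lemma mink_comb_norm a b w u :
  mink (vadd (vscal a w) (vscal b u)) (vadd (vscal a w) (vscal b u))
  = a * a * mink w w + 2 * a * b * mink w u + b * b * mink u u.
Proof. destruct w, u; unfold mink, vadd, vscal; simpl; ring. Qed.

Lemma mink_comb_sub_norm a b c w u v :
  let d := vsub (vadd (vscal a w) (vscal b u)) (vadd (vscal a w) (vscal c v)) in
  mink d d = b * b * mink u u + c * c * mink v v - 2 * b * c * mink u v.
Proof. destruct w, u, v; unfold mink, vsub, vadd, vscal; simpl; ring. Qed.

Lemma mink_comb_add_norms a b u v n :
  mink (vadd (vscal a u) (vscal 1 n)) (vadd (vscal b v) (vscal 1 n))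
  = a * b * mink u v + a * mink u n + b * mink n v + mink n n.
Proof. destruct u, v, n; unfold mink, vadd, vscal; simpl; ring. Qed.

(* Reversed Cauchy-Schwarz on the spatial part: |p1 u1 + p2 u2| < p0 u0. *)
Lemma mink_timelike_null_lt0 p u :
  0 < x0 p -> mink p p < 0 -> 0 < x0 u -> mink u u = 0 -> mink p u < 0.
Proof.
destruct p as [p0 p1 p2], u as [u0 u1 u2]; unfold mink; simpl => Hp0 Hpp Hu0 Huu.
have Hlagrange : (p1*u1 + p2*u2)^2 + (p1*u2 - p2*u1)^2 = (p1*p1 + p2*p2) * (u1*u1 + u2*u2)
  by ring.
have Hprod : (p1*p1 + p2*p2) * (u1*u1 + u2*u2) < (p0*p0) * (u0*u0).
{ replace (u1*u1 + u2*u2) with (u0*u0) by lra. apply Rmult_lt_compat_r; nra. }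
have Hsq : (p1*u1 + p2*u2)^2 < (p0*u0)^2 by pose proof (pow2_ge_0 (p1*u2 - p2*u1)); nra.
have : 0 < p0*u0 by nra.
nra.
Qed.

(* Equality in the null Cauchy-Schwarz inequality forces v to be proportional to u. *)
Lemma mink_ideal_lt0 u v : ideal u -> ideal v -> not_prop u v -> mink u v < 0.
Proof.
move=> [Hu Hu0] [Hv Hv0] Hnp.
destruct u as [u0 u1 u2], v as [v0 v1 v2]; unfold mink in *; simpl in *.
have Hlagrange : (u1*v1 + u2*v2)^2 + (u1*v2 - u2*v1)^2 = (u1*u1 + u2*u2) * (v1*v1 + v2*v2)
  by ring.
have Hnorms : (u1*u1 + u2*u2) * (v1*v1 + v2*v2) = (u0*v0)^2.
{ replace (u1*u1 + u2*u2) with (u0*u0) by lra.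
  replace (v1*v1 + v2*v2) with (v0*v0) by lra. ring. }
have Hle : u1*v1 + u2*v2 <= u0*v0.
{ have Hpos : 0 < u0*v0 by nra.
  pose proof (pow2_ge_0 (u1*v2 - u2*v1)).
  destruct (Rle_or_lt (u1*v1 + u2*v2) (u0*v0)) as [h|h]; [exact h|].
  have : (u0*v0)^2 < (u1*v1 + u2*v2)^2 by simpl; nra.
  lra. }
destruct (Rle_lt_or_eq_dec _ _ Hle) as [Hlt|Heq]; [lra|exfalso].
have Hcross : u1*v2 = u2*v1.
{ rewrite Heq Hnorms in Hlagrange.
  have H0 : (u1*v2 - u2*v1)^2 = 0 by lra.
  apply Rminus_diag_uniq, Rsqr_0_uniq. unfold Rsqr. simpl in H0. lra. }
apply (Hnp (v0/u0)). unfold vscal; simpl.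
have E1 : u0*u0*v1 = u1*u0*v0.
{ replace (u0*u0) with (u1*u1 + u2*u2) by lra.
  replace (u1*u0*v0) with (u1*(u0*v0)) by ring. rewrite -Heq.
  replace (u1*(u1*v1 + u2*v2)) with (u1*u1*v1 + u2*(u1*v2)) by ring.
  rewrite Hcross. ring. }
have E2 : u0*u0*v2 = u2*u0*v0.
{ replace (u0*u0) with (u1*u1 + u2*u2) by lra.
  replace (u2*u0*v0) with (u2*(u0*v0)) by ring. rewrite -Heq.
  replace (u2*(u1*v1 + u2*v2)) with (u2*u2*v2 + u1*(u2*v1)) by ring.
  rewrite -Hcross. ring. }
f_equal; field_simplify; try lra;
  apply (Rmult_eq_reg_l (u0*u0)); try nra; field_simplify; lra.
Qed.

Lemma exp_horo_horo_len u v : mink u v < 0 -> exp (horo_horo_len u v) = - mink u v / 2.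
Proof. move=> H. unfold horo_horo_len. rewrite exp_ln; lra. Qed.

Lemma exp_pt_horo_len p u : mink p u < 0 -> exp (pt_horo_len p u) = - mink p u.
Proof. move=> H. unfold pt_horo_len. rewrite exp_ln; lra. Qed.

Lemma on_horo_sideE w u x : ideal w -> ideal u -> on_horo_side w u x ->
  exists b, x = vadd (vscal (1/2) w) (vscal b u) /\ b * mink u w = -1.
Proof.
move=> [Hw _] [Hu _] [[Hxx _] [Hxw [a [b Hx]]]]; subst x.
rewrite mink_combl Hw in Hxw.
rewrite mink_comb_norm Hw Hu (mink_sym w u) in Hxx.
exists b; split; [|lra]. do 2 f_equal. nra.
Qed.

Lemma ideal_angleE w u v th : ideal w -> ideal u -> ideal v -> ideal_angle w u v th ->
  th = 2 * sqrt (-2 * mink u v / (mink u w * mink v w)).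
Proof.
move=> Hw Hu Hv [xu [xv [Hxu [Hxv ->]]]].
have [b [-> Hb]] := on_horo_sideE Hw Hu Hxu.
have [c [-> Hc]] := on_horo_sideE Hw Hv Hxv.
rewrite mink_comb_sub_norm (proj1 Hu) (proj1 Hv).
have Huw : mink u w <> 0 by move=> h; rewrite h in Hb; lra.
have Hvw : mink v w <> 0 by move=> h; rewrite h in Hc; lra.
do 2 f_equal.
apply (Rmult_eq_reg_l (mink u w * mink v w)); last by apply Rmult_integral_contrapositive.
field_simplify => //.
replace (-2 * mink u w * mink v w * b * c * mink u v)
  with (-2 * (b * mink u w) * (c * mink v w) * mink u v) by ring.
rewrite Hb Hc. ring.
Qed.

Lemma footE n u p : ideal u -> hyperideal n -> mink u n < 0 -> foot n u p ->
  p = vadd (vscal (- / mink u n) u) (vscal 1 n).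
Proof.
move=> Hu Hn Hun Hf. have [[Hpp Hp0] [Hpn [a [b Hp]]]] := Hf.
have Hpu : mink p u < 0
  by apply: mink_timelike_null_lt0; try lra; case: Hu.
rewrite Hp in Hpn Hpp Hpu.
case: Hu => [Hu _]. unfold hyperideal in Hn.
rewrite mink_combl Hn in Hpn.
rewrite mink_comb_norm Hn Hu in Hpp.
rewrite mink_combl Hu (mink_sym n u) in Hpu.
have Hb : b = - a * mink u n by lra.
have Hb1 : b = 1.
{ have Hbpos : b > 0 by nra.
  rewrite Hb in Hpp. have : b * b = 1 by rewrite Hb; nra. nra. }
have Ha : a * mink u n = -1 by lra.
rewrite Hp Hb1. do 2 f_equal.
apply (Rmult_eq_reg_r (mink u n)); [|lra]. rewrite Ha. field. lra.
Qed.

Lemma cosh_double x : cosh (2 * x) = 1 + 2 * (sinh x * sinh x).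
Proof.
unfold cosh, sinh.
replace (2 * x) with (x + x) by ring. replace (- (x + x)) with (- x + - x) by ring.
rewrite !exp_plus.
have : exp x * exp (- x) = 1 by rewrite -exp_plus Rplus_opp_r exp_0.
nra.
Qed.

Lemma cosh_sqr_sub_sinh_sqr x : cosh x * cosh x - sinh x * sinh x = 1.
Proof.
unfold cosh, sinh.
have : exp x * exp (- x) = 1 by rewrite -exp_plus Rplus_opp_r exp_0.
nra.
Qed.

Lemma cosh_pos x : 0 < cosh x.
Proof. unfold cosh. pose proof (exp_pos x). pose proof (exp_pos (- x)). lra. Qed.

Lemma sinh_pos x : 0 < x -> 0 < sinh x.
Proof. by move=> Hx; rewrite -sinh_0; apply: sinh_lt. Qed.

Definition gen_type (d : Z) : Prop := d = (-1)%Z \/ d = 0%Z \/ d = 1%Z.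

Lemma rho_half_pos d phi : gen_type d -> in_I d phi -> 0 < rho d (phi / 2).
Proof.
case=> [->|[->|->]]; unfold rho, in_I; simpl => Hphi.
- apply sinh_pos; lra.
- lra.
- apply sin_gt_0; lra.
Qed.

Lemma exp_gen_len00_hyp ri rj phi l : gen_len00 1 ri rj phi l ->
  exp l = rho 1 (phi / 2) * rho 1 (phi / 2) * exp ri * exp rj.
Proof.
unfold gen_len00, rho; simpl.
case=> [[-> ->]|[Hlt [ui [uj [q [Hui [Huj [Hnp [Hq [Hri [Hrj [Hang Hl]]]]]]]]]]]].
  by rewrite sin_PI2 exp_plus; ring.
have [tu [tv [[Htq [_ [a [Ha Eu]]]] [[Hvq [_ [b [Hb Ev]]]] [_ Hcos]]]]] := Hang.
have Hqq : mink q q = -1 by case: Hq.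
have Mi : mink q ui = - a
  by rewrite Eu mink_scalr mink_addr Hqq (mink_sym q tu) Htq; ring.
have Mj : mink q uj = - b
  by rewrite Ev mink_scalr mink_addr Hqq (mink_sym q tv) Hvq; ring.
have Ea : exp ri = a by rewrite -Hri exp_pt_horo_len; lra.
have Eb : exp rj = b by rewrite -Hrj exp_pt_horo_len; lra.
have Muv : mink ui uj = a * b * (-1 + cos phi).
{ rewrite Eu Ev mink_scall mink_scalr !mink_addl !mink_addr (mink_sym q tv) Htq Hvq Hqq -Hcos.
  ring. }
rewrite -Hl exp_horo_horo_len; last exact: mink_ideal_lt0.
rewrite Muv Ea Eb.
replace phi with (2 * (phi / 2)) at 1 by field. rewrite cos_2a_sin. field.
Qed.

Lemma exp_gen_len00_horo ri rj phi l : gen_len00 0 ri rj phi l ->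
  exp l = rho 0 (phi / 2) * rho 0 (phi / 2) * exp ri * exp rj.
Proof.
unfold gen_len00, rho; simpl.
move=> [ui [uj [w [Hui [Huj [Hw [Hnp [Hwi [Hwj [Hri [Hrj [Hang Hl]]]]]]]]]]]].
have Nij := mink_ideal_lt0 Hui Huj Hnp.
have Nwi := mink_ideal_lt0 Hw Hui Hwi.
have Nwj := mink_ideal_lt0 Hw Huj Hwj.
rewrite (ideal_angleE Hw Hui Huj Hang) (mink_sym ui w) (mink_sym uj w).
replace (2 * sqrt (-2 * mink ui uj / (mink w ui * mink w uj)) / 2)
  with (sqrt (-2 * mink ui uj / (mink w ui * mink w uj))) by field.
rewrite sqrt_sqrt; last by apply Rle_mult_inv_pos; nra.
rewrite -Hl -Hri -Hrj !exp_horo_horo_len //. field. lra.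
Qed.

Lemma exp_gen_len00_hyperideal ri rj phi l : gen_len00 (-1) ri rj phi l ->
  exp l = rho (-1) (phi / 2) * rho (-1) (phi / 2) * exp ri * exp rj.
Proof.
unfold gen_len00, rho; simpl.
move=> [ui [uj [n [Hui [Huj [Hn [Hnp [Hin [Hjn [[pi [pj [Fi [Fj [Hri Hrj]]]]] [Hang Hl]]]]]]]]]]].
have [Hii _] := Hui. have [Hjj _] := Huj.
have Ei : exp ri = - mink ui n.
{ rewrite -Hri (footE Hui Hn Hin Fi) exp_pt_horo_len mink_combl Hii (mink_sym n ui);
    [ring|lra]. }
have Ej : exp rj = - mink uj n.
{ rewrite -Hrj (footE Huj Hn Hjn Fj) exp_pt_horo_len mink_combl Hjj (mink_sym n uj);
    [ring|lra]. }
have [pu [pv [Fu [Fv [_ Hcosh]]]]] := Hang.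
rewrite (footE Hui Hn Hin Fu) (footE Huj Hn Hjn Fv) mink_comb_add_norms Hn (mink_sym n uj)
  in Hcosh.
replace phi with (2 * (phi / 2)) in Hcosh by field. rewrite cosh_double in Hcosh.
have Hsinh : sinh (phi / 2) * sinh (phi / 2) = - mink ui uj / (2 * (mink ui n * mink uj n)).
{ move: Hcosh; set s := sinh (phi / 2) * sinh (phi / 2) => Hcosh.
  have -> : s = (1 + 2 * s - 1) / 2 by field.
  rewrite Hcosh. field. lra. }
rewrite -Hl exp_horo_horo_len; last exact: mink_ideal_lt0.
rewrite Hsinh Ei Ej. field. lra.
Qed.

Lemma exp_gen_len00 d ri rj phi l : gen_type d -> gen_len00 d ri rj phi l ->
  exp l = rho d (phi / 2) * rho d (phi / 2) * exp ri * exp rj.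
Proof.
case=> [->|[->|->]];
  [exact: exp_gen_len00_hyperideal | exact: exp_gen_len00_horo | exact: exp_gen_len00_hyp].
Qed.

Lemma cn2_cn1 k : cn2 (cn1 k) = k.
Proof. by apply/val_inj; case: k => [[|[|[|m]]] Hm]. Qed.

Lemma cn1_cn2 k : cn1 (cn2 k) = k.
Proof. by apply/val_inj; case: k => [[|[|[|m]]] Hm]. Qed.

Lemma cn2_cn2 k : cn2 (cn2 k) = cn1 k.
Proof. by apply/val_inj; case: k => [[|[|[|m]]] Hm]. Qed.

Lemma dec_ideal_tri_mink u len k : dec_ideal_tri u len ->
  mink (u (cn1 k)) (u (cn2 k)) = -2 * exp (len k).
Proof.
move=> [Hid [Hnp Hlen]].
rewrite -Hlen exp_horo_horo_len; [field|exact: mink_ideal_lt0].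
Qed.

Lemma dec_ideal_tri_angle u len k th : dec_ideal_tri u len ->
  ideal_angle (u k) (u (cn1 k)) (u (cn2 k)) th ->
  th = 2 * sqrt (exp (len k) / (exp (len (cn1 k)) * exp (len (cn2 k)))).
Proof.
move=> Htri Hang. have [Hid _] := Htri.
rewrite (ideal_angleE (Hid k) (Hid _) (Hid _) Hang) (mink_sym (u (cn1 k)) (u k)).
have M1 := dec_ideal_tri_mink (cn1 k) Htri.
have M2 := dec_ideal_tri_mink (cn2 k) Htri.
rewrite cn2_cn1 in M1. rewrite cn1_cn2 cn2_cn2 in M2.
rewrite (dec_ideal_tri_mink k Htri) M1 M2. do 2 f_equal.
field. split; apply Rgt_not_eq, exp_pos.
Qed.

Definition angle_coef (E F : finType) (fe : F -> 'I_3 -> E) d (Phi : E -> R) f k :=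
  2 * rho d (Phi (fe f k) / 2)
    / (rho d (Phi (fe f (cn1 k)) / 2) * rho d (Phi (fe f (cn2 k)) / 2)).

Lemma angle_coef_pos (E F : finType) (fe : F -> 'I_3 -> E) d (Phi : E -> R) f k :
  gen_type d -> (forall e, in_I d (Phi e)) -> 0 < angle_coef fe d Phi f k.
Proof.
move=> Hd HPhi. have P := fun e => rho_half_pos Hd (HPhi e).
apply Rdiv_lt_0_compat; [have := P (fe f k); lra|exact: Rmult_lt_0_compat].
Qed.

Lemma packing_angle (V E F : finType) (fv : F -> 'I_3 -> V) (fe : F -> 'I_3 -> E)
  d (Phi : E -> R) r l f u k th :
  gen_type d -> (forall e, in_I d (Phi e)) ->
  packing_lengths fv fe d Phi r l ->
  dec_ideal_tri u (fun k' => l (fe f k')) ->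
  ideal_angle (u k) (u (cn1 k)) (u (cn2 k)) th ->
  th = angle_coef fe d Phi f k * exp (- r (fv f k)).
Proof.
move=> Hd HPhi Hp Htri Hang. rewrite /angle_coef.
have L0 := exp_gen_len00 Hd (Hp f k).
have L1 := exp_gen_len00 Hd (Hp f (cn1 k)).
have L2 := exp_gen_len00 Hd (Hp f (cn2 k)).
rewrite cn2_cn1 in L1. rewrite cn1_cn2 cn2_cn2 in L2.
rewrite (dec_ideal_tri_angle Htri Hang) /= L0 L1 L2 exp_Ropp.
set p0 := rho d (Phi (fe f k) / 2).
set p1 := rho d (Phi (fe f (cn1 k)) / 2).
set p2 := rho d (Phi (fe f (cn2 k)) / 2).
set e0 := exp (r (fv f k)).
set e1 := exp (r (fv f (cn1 k))).
set e2 := exp (r (fv f (cn2 k))).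
have P0 : 0 < p0 := rho_half_pos Hd (HPhi _).
have P1 : 0 < p1 := rho_half_pos Hd (HPhi _).
have P2 : 0 < p2 := rho_half_pos Hd (HPhi _).
have [E0 [E1 E2]] : 0 < e0 /\ 0 < e1 /\ 0 < e2 by repeat split; apply exp_pos.
have -> : p0 * p0 * e1 * e2 / (p1 * p1 * e2 * e0 * (p2 * p2 * e0 * e1))
          = (p0 / (p1 * p2 * e0)) * (p0 / (p1 * p2 * e0))
  by field; repeat split; lra.
rewrite sqrt_square; first by field; repeat split; lra.
apply Rlt_le, Rdiv_lt_0_compat; [lra|]. apply Rmult_lt_0_compat; [nra|lra].
Qed.

Definition gen_len00_val d ri rj phi :=
  ln (rho d (phi / 2) * rho d (phi / 2) * exp ri * exp rj).

Lemma gen_len00_valC d ri rj phi : gen_len00_val d ri rj phi = gen_len00_val d rj ri phi.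
Proof. unfold gen_len00_val. f_equal. ring. Qed.

Lemma ln_eq_of_exp x y : x = exp y -> ln x = y.
Proof. by move=> ->; apply ln_exp. Qed.

(* Horodisk at w = (2/P)(1,0,1), ideal vertices e^{r_i} P (1,1,0) and e^{r_j} P (1,-1,0),
   with P = Φ/2; the horocycle points are w/2 + (1/(2 e^r)) u. *)
Lemma gen_len00_horo_val ri rj phi : in_I 0 phi ->
  gen_len00 0 ri rj phi (gen_len00_val 0 ri rj phi).
Proof.
unfold gen_len00, gen_len00_val, rho, in_I; simpl => Hphi.
set P := phi / 2. have HP : 0 < P by rewrite /P; lra.
have HiP : 0 < 1 / P by apply Rdiv_lt_0_compat; lra.
have Hi := exp_pos ri. have Hj := exp_pos rj.
exists (mkv (exp ri * P) (exp ri * P) 0), (mkv (exp rj * P) (- (exp rj * P)) 0),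
  (mkv (2 / P) 0 (2 / P)).
unfold ideal, not_prop, horo_horo_len, mink, vscal; simpl.
split; [split; [ring|nra]|]. split; [split; [ring|nra]|].
split; [split; [field; lra|apply Rdiv_lt_0_compat; lra]|].
do 3 (split; [by move=> c [] *; nra|]).
split; [by apply ln_eq_of_exp; field; lra|].
split; [by apply ln_eq_of_exp; field; lra|].
split; last by f_equal; field.
exists (mkv (1 / P + P / 2) (P / 2) (1 / P)), (mkv (1 / P + P / 2) (- (P / 2)) (1 / P)).
unfold on_horo_side, H2pt, mink, vsub, vadd, vscal; simpl.
split; [split; [split; [field; lra|lra]|split; [field; lra|]]|].
  by exists (1 / 2), (1 / (2 * exp ri)); f_equal; field; lra.
split; [split; [split; [field; lra|lra]|split; [field; lra|]]|].
  by exists (1 / 2), (1 / (2 * exp rj)); f_equal; field; lra.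
match goal with |- _ = 2 * sqrt ?x => replace x with (P * P) by (field; lra) end.
rewrite sqrt_square; [rewrite /P; field|lra].
Qed.

(* Vertex q = (1,0,0), ideal vertices e^{r_i} (1,1,0) and e^{r_j} (1, cos Φ, sin Φ). *)
Lemma gen_len00_hyp_val ri rj phi : in_I 1 phi ->
  gen_len00 1 ri rj phi (gen_len00_val 1 ri rj phi).
Proof.
unfold gen_len00, gen_len00_val, rho, in_I; simpl => [[Hphi HPI]].
have Hi := exp_pos ri. have Hj := exp_pos rj.
destruct (Req_dec phi PI) as [->|Hne].
  by left; split => //; apply ln_eq_of_exp; rewrite sin_PI2 exp_plus; ring.
right. split; [lra|].
have Hs : 0 < sin phi by apply sin_gt_0; lra.
have Hsc : sin phi * sin phi + cos phi * cos phi = 1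
  by pose proof (sin2_cos2 phi); unfold Rsqr in *; lra.
exists (mkv (exp ri) (exp ri) 0), (mkv (exp rj) (exp rj * cos phi) (exp rj * sin phi)), (mkv 1 0 0).
unfold ideal, not_prop, H2pt, pt_horo_len, horo_horo_len, hyp_angle, tangent_to,
  mink, vscal, vadd; simpl.
split; [split; [ring|lra]|].
split; [split; [|lra]|].
  transitivity (exp rj * exp rj * (sin phi * sin phi + cos phi * cos phi - 1)); first ring.
  by rewrite Hsc; ring.
split; [by move=> c [] *; nra|].
split; [split; [ring|lra]|].
split; [by apply ln_eq_of_exp; field; lra|].
split; [by apply ln_eq_of_exp; field; lra|].
split.
- exists (mkv 0 1 0), (mkv 0 (cos phi) (sin phi)); simpl.
  split; [split; [ring|split; [ring|exists (exp ri); split; [lra|f_equal; ring]]]|].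
  split; [split; [ring|split; [lra|exists (exp rj); split; [lra|f_equal; ring]]]|].
  split; [lra|ring].
- f_equal. replace phi with (2 * (phi / 2)) at 1 2 by field.
  rewrite cos_2a_sin. field.
Qed.

(* Truncating geodesic n^⊥ with n = (0,0,1), ideal vertices
   e^{r_i} (cosh(Φ/2), sinh(Φ/2), -1) and e^{r_j} (cosh(Φ/2), -sinh(Φ/2), -1),
   with feet (cosh(Φ/2), ±sinh(Φ/2), 0). *)
Lemma gen_len00_hyperideal_val ri rj phi : in_I (-1) phi ->
  gen_len00 (-1) ri rj phi (gen_len00_val (-1) ri rj phi).
Proof.
unfold gen_len00, gen_len00_val, rho, in_I; simpl => Hphi.
have Hi := exp_pos ri. have Hj := exp_pos rj.
set ch := cosh (phi / 2). set sh := sinh (phi / 2).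
have Hcs : ch * ch - sh * sh = 1 by apply cosh_sqr_sub_sinh_sqr.
have Hch : 0 < ch by apply cosh_pos.
have Hsh : 0 < sh by apply sinh_pos; lra.
have Hfeet : foot (mkv 0 0 1) (mkv (exp ri * ch) (exp ri * sh) (- exp ri)) (mkv ch sh 0) /\
             foot (mkv 0 0 1) (mkv (exp rj * ch) (- (exp rj * sh)) (- exp rj)) (mkv ch (- sh) 0).
{ unfold foot, H2pt, mink, vadd, vscal; simpl.
  split; (split; [split; [nra|lra]|split; [ring|]]).
  - by exists (1 / exp ri), 1; f_equal; field; lra.
  - by exists (1 / exp rj), 1; f_equal; field; lra. }
exists (mkv (exp ri * ch) (exp ri * sh) (- exp ri)),
  (mkv (exp rj * ch) (- (exp rj * sh)) (- exp rj)), (mkv 0 0 1).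
unfold ideal, hyperideal, not_prop, hyperideal_angle, pt_horo_len, horo_horo_len, mink,
  vscal, vadd; simpl.
split; [split; [nra|nra]|]. split; [split; [nra|nra]|].
split; [ring|]. split; [by move=> c [] *; nra|].
split; [lra|]. split; [lra|].
split.
  exists (mkv ch sh 0), (mkv ch (- sh) 0); simpl.
  by split; [apply Hfeet|split; [apply Hfeet|split; apply ln_eq_of_exp; nra]].
split.
- exists (mkv ch sh 0), (mkv ch (- sh) 0); simpl.
  split; [apply Hfeet|split; [apply Hfeet|split; [lra|]]].
  replace phi with (2 * (phi / 2)) at 1 by field. rewrite cosh_double. fold sh. nra.
- f_equal. have Ec : ch * ch = 1 + sh * sh by lra.
  transitivity (exp ri * exp rj * ((ch * ch + sh * sh) - 1) / 2); [field|rewrite Ec; field].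
Qed.

Lemma gen_len00_val_spec d ri rj phi : gen_type d -> in_I d phi ->
  gen_len00 d ri rj phi (gen_len00_val d ri rj phi).
Proof.
case=> [->|[->|->]];
  [exact: gen_len00_hyperideal_val | exact: gen_len00_horo_val | exact: gen_len00_hyp_val].
Qed.

Lemma forall_ord3 (P : 'I_3 -> Prop) :
  P (@Ordinal 3 0 isT) -> P (@Ordinal 3 1 isT) -> P (@Ordinal 3 2 isT) -> forall k, P k.
Proof.
move=> H0 H1 H2 [[|[|[|m]]] Hm] //.
- by have -> : Ordinal Hm = @Ordinal 3 0 isT by apply/val_inj.
- by have -> : Ordinal Hm = @Ordinal 3 1 isT by apply/val_inj.
- by have -> : Ordinal Hm = @Ordinal 3 2 isT by apply/val_inj.
Qed.

(* With A, B, C the exponentials of half the edge lengths, the ideal vertices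
   (2BC/A)(1,0,1), (AC/B)(1,1,0), (AB/C)(1,-1,0) have pairwise products
   -2A^2, -2B^2, -2C^2. *)
Definition dec_ideal_tri_of (len : 'I_3 -> R) (k : 'I_3) : vec3 :=
  let A := exp (len (@Ordinal 3 0 isT) / 2) in
  let B := exp (len (@Ordinal 3 1 isT) / 2) in
  let C := exp (len (@Ordinal 3 2 isT) / 2) in
  match nat_of_ord k with
  | 0%nat => mkv (2 * B * C / A) 0 (2 * B * C / A)
  | 1%nat => mkv (A * C / B) (A * C / B) 0
  | _ => mkv (A * B / C) (- (A * B / C)) 0
  end.

Lemma exp_half_sqr x : exp (x / 2) * exp (x / 2) = exp x.
Proof. by rewrite -exp_plus; f_equal; field. Qed.

Lemma dec_ideal_tri_ofP len : dec_ideal_tri (dec_ideal_tri_of len) len.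
Proof.
have EA := exp_half_sqr (len (@Ordinal 3 0 isT)).
have EB := exp_half_sqr (len (@Ordinal 3 1 isT)).
have EC := exp_half_sqr (len (@Ordinal 3 2 isT)).
unfold dec_ideal_tri_of.
set A := exp (len _ / 2) in EA *. set B := exp (len _ / 2) in EB *.
set C := exp (len _ / 2) in EC *.
have [HA [HB HC]] : 0 < A /\ 0 < B /\ 0 < C by repeat split; apply exp_pos.
have HAB : 0 < A * B / C by apply Rdiv_lt_0_compat; nra.
have HAC : 0 < A * C / B by apply Rdiv_lt_0_compat; nra.
have HBC : 0 < 2 * B * C / A by apply Rdiv_lt_0_compat; nra.
split; [|split]; apply forall_ord3; rewrite /ideal /not_prop /horo_horo_len /mink /vscal /=.
1-3: by split; [ring|lra].
1-3: by move=> c [] *; nra.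
- by apply ln_eq_of_exp; rewrite -EA; field; lra.
- by apply ln_eq_of_exp; rewrite -EB; field; lra.
- by apply ln_eq_of_exp; rewrite -EC; field; lra.
Qed.

Lemma Rplus_assoc_law : associative Rplus. Proof. by move=> a b c; ring. Qed.
Lemma Rplus_comm_law : commutative Rplus. Proof. by move=> a b; ring. Qed.
Lemma Rplus_0_law : left_id 0 Rplus. Proof. by move=> a; ring. Qed.
HB.instance Definition _ :=
  Monoid.isComLaw.Build R 0 Rplus Rplus_assoc_law Rplus_comm_law Rplus_0_law.

Lemma Rsum_gt0 (I : finType) (P : pred I) (G : I -> R) :
  (forall i, P i -> 0 < G i) -> (exists i, P i) -> 0 < \big[Rplus/0]_(i | P i) G i.
Proof.
move=> HG [j Pj]. rewrite (bigD1 j Pj) /=.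
have : 0 <= \big[Rplus/0]_(i | P i && (i != j)) G i.
  apply: (big_ind (fun x => 0 <= x)) => [|x y|i /andP [Pi _]]; [lra|lra|].
  exact/Rlt_le/HG.
have := HG j Pj. lra.
Qed.

Lemma Rsum_mulr_eq (I : finType) (P : pred I) (G H : I -> R) (c : R) :
  (forall i, P i -> G i = H i * c) ->
  \big[Rplus/0]_(i | P i) G i = (\big[Rplus/0]_(i | P i) H i) * c.
Proof.
move=> HGH.
by apply: (big_ind2 (fun x y => x = y * c)) => [|x1 x2 y1 y2 -> ->|]; [ring|ring|].
Qed.

Lemma in_N_all (V E F : finType) (fv : F -> 'I_3 -> V) (fe : F -> 'I_3 -> E)
  d (Phi : E -> R) (r : V -> R) :
  closed_tri_surface fv fe -> gen_type d -> (forall e, in_I d (Phi e)) ->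
  in_N fv fe d Phi r.
Proof.
move=> [_ [_ Hends]] Hd HPhi.
exists (fun e => if [pick c : (F * 'I_3)%type | fe c.1 c.2 == e] is Some c
                 then gen_len00_val d (r (fv c.1 (cn1 c.2))) (r (fv c.1 (cn2 c.2))) (Phi e)
                 else 0).
split=> [f k|f]; last by eexists; exact: dec_ideal_tri_ofP.
case: pickP => [c /eqP Hc|Hnone]; last by have := Hnone (f, k); rewrite /= eqxx.
have [[-> ->]|[-> ->]] := Hends _ _ _ _ Hc; last rewrite gen_len00_valC;
  exact: gen_len00_val_spec.
Qed.

Theorem mainTheorem15 (V E F : finType) (fv : F -> 'I_3 -> V) (fe : F -> 'I_3 -> E)
  (Hsurf : closed_tri_surface fv fe)
  (d : Z) (Hd : d = (-1)%Z \/ d = 0%Z \/ d = 1%Z)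
  (Phi : E -> R) (HPhi : forall e, in_I d (Phi e)) :
  (forall r : V -> R, in_N fv fe d Phi r) /\
  (forall (r : V -> R) (l : E -> R) (f : F) (u : 'I_3 -> vec3) (k : 'I_3) (th : R),
     packing_lengths fv fe d Phi r l ->
     dec_ideal_tri u (fun k' => l (fe f k')) ->
     ideal_angle (u k) (u (cn1 k)) (u (cn2 k)) th ->
     th = 2 * rho d (Phi (fe f k) / 2)
            / (rho d (Phi (fe f (cn1 k)) / 2) * rho d (Phi (fe f (cn2 k)) / 2))
            * exp (- r (fv f k))) /\
  (exists C : V -> R, (forall v, 0 < C v) /\
     forall (r : V -> R) (K : V -> R), is_Ktilde fv fe d Phi r K ->
       forall v, K v = C v * exp (- r v)).
Proof.
split; [|split]; first by move=> r; exact: in_N_all.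
  by move=> r l f u k th; exact: packing_angle.
exists (fun v =>
  \big[Rplus/0]_(c : (F * 'I_3)%type | fv c.1 c.2 == v) angle_coef fe d Phi c.1 c.2).
split=> [v|r K [l [Hp [th [Hth HK]]]] v].
  apply: Rsum_gt0 => [[f k] _|]; first exact: angle_coef_pos.
  have [f [k Hfk]] := proj1 Hsurf v. by exists (f, k); apply/eqP.
rewrite HK. apply: Rsum_mulr_eq => -[f k] /= /eqP <-.
have [u [Hu Hang]] := Hth f.
exact: packing_angle Hp Hu (Hang k).
Qed.
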